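(* Let $X$ and $Y$ be Banach spaces and let $F:X\to Y$ be continuous and Gâteaux-differentiable, with $F(0)=0$. Let $R>0$ and $m>0$, and assume that for every $x\in X$ with $\|x\|\le R$ the derivative $DF(x)$ has a right-inverse $L(x)$ (a bounded linear map $Y\to X$ with $DF(x)L(x)v=v$ for all $v\in Y$) satisfying $\|L(x)\|\le m$. Then for every $\bar y\in Y$ with $\|\bar y\|<R/m$ and every $\mu>m$ there is some $\bar x\in X$ such that $\|\bar x\|<R$, $\|\bar x\|\le\mu\|\bar y\|$, and $F(\bar x)=\bar y$.
   Context: $F$ is Gâteaux-differentiable at $x$ if there is a continuous linear map $DF(x):X\to Y$ such that for every $u\in X$, $\lim_{t\to0}\|(F(x+tu)-F(x))/t-DF(x)u\|=0$. *)

From HB Require Import structures.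
From mathcomp Require Import all_boot all_order all_algebra.
From mathcomp Require Import all_classical all_reals all_analysis.
Set Implicit Arguments. Unset Strict Implicit. Unset Printing Implicit Defensive.
Import Order.TTheory GRing.Theory Num.Theory.
Import numFieldNormedType.Exports.
Local Open Scope classical_set_scope.
Local Open Scope ring_scope.

Definition is_gateaux_derivative (R : realType) (X Y : normedModType R)
  (F : X -> Y) (x : X) (D : {linear X -> Y}) : Prop :=
  continuous D /\
  forall u : X,
    (fun t : R => t^-1 *: (F (x + t *: u) - F x)) @ 0^' --> D u.

From HB Require Import structures.
From mathcomp Require Import all_boot all_order all_algebra.
From mathcomp Require Import all_classical all_reals all_analysis.
From mathcomp Require Import lra.
Import Order.TTheory GRing.Theory Num.Theory.
Import numFieldNormedType.Exports.
Local Open Scope classical_set_scope.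
Local Open Scope ring_scope.

(* Apply Ekeland's variational principle to x |-> |F x - ybar| on X, starting
   from 0, with a slope e slightly below 1/m.  The resulting point xb satisfies
   e |xb| <= |ybar|, which gives both norm bounds, and no point beats it by more
   than e times the distance.  If F xb <> ybar, moving from xb in the direction
   u = L(ybar - F xb) decreases the residual at rate |F xb - ybar| while costing
   only e |u| <= e m |F xb - ybar| < |F xb - ybar|: a contradiction. *)

Lemma exists_harmonic_lt {R : archiRealFieldType} (c : R) :
  0 < c -> exists n, harmonic n < c.
Proof.
move=> c_gt0; have /cvgrPdist_lt /(_ c c_gt0) := @cvg_harmonic R.
move=> /filter_ex [n]; rewrite sub0r normrN ger0_norm //; last exact: harmonic_ge0.
by exists n.
Qed.

Lemma norm_sub_le_segment {R : numFieldType} {Y : normedModType R} (a w y : Y) (t : R) :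
  0 < t <= 1 ->
  `|a - y| <= (1 - t) * `|w - y| + t * `|t^-1 *: (a - w) + (w - y)|.
Proof.
case/andP=> t_gt0 t_le1.
have -> : a - y = (1 - t) *: (w - y) + t *: (t^-1 *: (a - w) + (w - y)).
  rewrite [t *: (_ + _)]scalerDr scalerA mulfV ?gt_eqF // scale1r scalerBl scale1r.
  by rewrite addrACA addNr addr0 addrC addrA subrK.
apply: le_trans (ler_normD _ _) _; rewrite !normrZ.
by rewrite (gtr0_norm t_gt0) ger0_norm ?subr_ge0.
Qed.

Section Ekeland.
Context {R : realType} {X : completeNormedModType R} {f : X -> R} {e : R}.
Hypotheses (f_cont : continuous f) (f_ge0 : forall x, 0 <= f x) (e_gt0 : 0 < e).

Let S z := [set y | f y + e * `|y - z| <= f z].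

Let S_refl z : S z z.
Proof. by rewrite /S /= subrr normr0 mulr0 addr0. Qed.

Let S_trans {z y w} : S z y -> S y w -> S z w.
Proof.
rewrite /S /= => Szy Syw.
have : `|w - z| <= `|w - y| + `|y - z| by rewrite -[w - z](subrKA y) ler_normD.
move=> /(ler_wpM2l (ltW e_gt0)); rewrite mulrDr; lra.
Qed.

Let S_dist_le {z y} : S z y -> e * `|y - z| <= f z - f y.
Proof. rewrite /S /=; lra. Qed.

Let has_inf_S z : has_inf (f @` S z).
Proof. by split; [exists (f z), z | exists 0 => _ [y _ <-]]. Qed.

Let S_near_inf z n : exists y, S z y /\ f y < inf (f @` S z) + harmonic n.
Proof.
have [_ [y Szy <-] fy_lt] := inf_adherent (harmonic_gt0 n) (has_inf_S z).
by exists y.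
Qed.

Variable x0 : X.

Fixpoint ekeland_seq n : X :=
  if n is k.+1 then sval (cid (S_near_inf (ekeland_seq k) k)) else x0.

Local Notation x := ekeland_seq.

Let seq_succ n : S (x n) (x n.+1) /\ f (x n.+1) < inf (f @` S (x n)) + harmonic n.
Proof. by rewrite /=; case: cid. Qed.

Let seq_mono n k : (n <= k)%N -> S (x n) (x k).
Proof.
elim: k => [|k IH]; first by rewrite leqn0 => /eqP->.
rewrite leq_eqVlt => /orP[/eqP->|/IH Snk]; first exact: S_refl.
exact: S_trans Snk (seq_succ k).1.
Qed.

(* [S (x n.+1)] is contained in [S (x n)], whose infimum [f (x n.+1)] nearly attains. *)
Let seq_value_gap {n y} : S (x n.+1) y -> f (x n.+1) - f y < harmonic n.
Proof.
move=> Sy; have [Sxn fx_lt] := seq_succ n.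
have : inf (f @` S (x n)) <= f y.
  by apply: (ge_inf (has_inf_S _).2); exists y => //; exact: S_trans Sxn Sy.
lra.
Qed.

Let seq_cvg : cvg (x @ \oo).
Proof.
apply/cauchy_cvgP/cauchy_exP => eps eps_gt0.
have [N hN] := exists_harmonic_lt _ (mulr_gt0 e_gt0 eps_gt0).
exists (x N.+1); apply: filterS (nbhs_infty_ge N.+1) => k /seq_mono SNk.
rewrite -ball_normE /= distrC -(ltr_pM2l e_gt0).
have := S_dist_le SNk; have := seq_value_gap SNk; lra.
Qed.

Let xb := lim (x @ \oo).

Let S_lim n : S (x n) xb.
Proof.
have xb_cvg : x @ \oo --> xb := seq_cvg.
have cvg_sum : (fun k => f (x k) + e * `|x k - x n|) @ \oo --> f xb + e * `|xb - x n|.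
  apply: cvgD; first exact: continuous_cvg (f_cont xb) xb_cvg.
  by apply: cvgMr; apply: cvg_norm; apply: cvgB; [exact: xb_cvg|exact: cvg_cst].
apply: (closed_cvg _ (@closed_le R (f (x n))) _ _ cvg_sum).
by apply: filterS (nbhs_infty_ge n) => k /seq_mono.
Qed.

Let S_lim_eq y : S xb y -> y = xb.
Proof.
move=> Sy; apply/eqP; rewrite -subr_eq0 -normr_le0 leNgt; apply/negP => dist_gt0.
have [N hN] := exists_harmonic_lt _ (mulr_gt0 e_gt0 dist_gt0).
have := S_dist_le Sy; have := S_dist_le (S_lim N.+1).
have := seq_value_gap (S_trans (S_lim N.+1) Sy).
have := mulr_ge0 (ltW e_gt0) (normr_ge0 (xb - x N.+1)); lra.
Qed.

Lemma ekeland_variational_principle :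
  exists xb, f xb + e * `|xb - x0| <= f x0 /\
    forall z, f xb <= f z + e * `|z - xb|.
Proof.
exists xb; split; first exact: (S_lim 0).
move=> z; rewrite leNgt; apply/negP => lt_z.
have Sz : S xb z := ltW lt_z.
by move: lt_z; rewrite (S_lim_eq _ Sz) subrr normr0 mulr0 addr0 ltxx.
Qed.

End Ekeland.

Lemma gateaux_ekeland_point_eq (R : realType) (X Y : normedModType R)
    (F : X -> Y) (D : {linear X -> Y}) (x : X) (y : Y) (e m : R) :
  is_gateaux_derivative F x D ->
  (forall v, exists2 u, D u = v & `|u| <= m * `|v|) ->
  0 <= e -> e * m < 1 ->
  (forall z, `|F x - y| <= `|F z - y| + e * `|z - x|) ->
  F x = y.
Proof.
move=> [_ D_lim] D_open e_ge0 em_lt1 x_min.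
apply/eqP; rewrite -subr_eq0 -normr_le0 leNgt; apply/negP => v_gt0.
set v := F x - y in v_gt0 x_min *.
have [u Du u_le] := D_open (- v); rewrite normrN in u_le.
pose q t := t^-1 *: (F (x + t *: u) - F x).
pose d := (1 - e * m) * `|v|.
have d_gt0 : 0 < d by rewrite mulr_gt0 // subr_gt0.
have q_cvg : q t @[t --> 0^'+] --> - v.
  by rewrite -Du; exact: cvg_dnbhs_at_right (D_lim u).
move/cvgrPdist_lt : q_cvg => /(_ d d_gt0) q_close.
have [t [t_gt0 t_le1 q_near]] : exists t, [/\ 0 < t, t <= 1 & `|q t + v| < d].
  near (0 : R)^'+ => t; exists t; split.
  - by near: t; exact: nbhs_right_gt.
  - by near: t; exact: nbhs_right_le.
  - rewrite -[v]opprK distrC; near: t; exact: q_close.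
have t_in : 0 < t <= 1 by rewrite t_gt0 t_le1.
have := norm_sub_le_segment (F (x + t *: u)) (F x) y t t_in.
have := x_min (x + t *: u); rewrite addrAC subrr add0r normrZ gtr0_norm //.
have : t * `|q t + v| < t * d by rewrite ltr_pM2l.
have : e * (t * `|u|) <= t * (e * m * `|v|).
  by rewrite mulrCA -mulrA ler_wpM2l ?(ltW t_gt0) // ler_wpM2l.
rewrite -/(q t) -/v /d; nra.
Unshelve. all: by end_near.
Qed.

Theorem theorem2 (R : realType) (X Y : completeNormedModType R)
  (F : X -> Y) (DF : X -> {linear X -> Y})
  (Fcont : continuous F)
  (Fgat : forall x : X, is_gateaux_derivative F x (DF x))
  (F0 : F 0 = 0)
  (r m : R) (r_gt0 : 0 < r) (m_gt0 : 0 < m)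
  (hL : forall x : X, `|x| <= r ->
     exists L : {linear Y -> X},
       continuous L /\ (forall v : Y, DF x (L v) = v) /\
       (forall v : Y, `|L v| <= m * `|v|)) :
  forall (ybar : Y), `|ybar| < r / m ->
  forall mu : R, m < mu ->
  exists xbar : X, `|xbar| < r /\ `|xbar| <= mu * `|ybar| /\ F xbar = ybar.
Proof.
move=> ybar ybar_lt mu m_lt_mu.
have mu_gt0 : 0 < mu := lt_trans m_gt0 m_lt_mu.
have [e e_gt0 [mu_le_e ybar_lt_er em_lt1]] :
    exists2 e, 0 < e & [/\ mu^-1 <= e, `|ybar| < e * r & e * m < 1].
  have max_lt : Num.max mu^-1 (`|ybar| / r) < m^-1.
    by rewrite gt_max ltf_pV2 ?posrE // m_lt_mu ltr_pdivrMr // mulrC.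
  have [+ e_lt] := midf_lt max_lt; rewrite gt_max => /andP[mu_lt ybar_lt'].
  exists ((Num.max mu^-1 (`|ybar| / r) + m^-1) / 2).
    by apply: lt_trans mu_lt; rewrite invr_gt0.
  by rewrite (ltW mu_lt) -ltr_pdivrMr // ybar_lt' -ltr_pdivlMr // div1r.
pose f x := `|F x - ybar|.
have f_cont : continuous f.
  by move=> x; apply: cvg_norm; apply: cvgB; [exact: Fcont | exact: cvg_cst].
have [xb [xb_le xb_min]] :=
  ekeland_variational_principle f_cont (fun x => normr_ge0 _) e_gt0 0.
have exb_le : e * `|xb| <= `|ybar|.
  move: xb_le; rewrite /f F0 sub0r normrN subr0.
  by have := normr_ge0 (F xb - ybar); lra.
have xb_lt_r : `|xb| < r by rewrite -(ltr_pM2l e_gt0) (le_lt_trans exb_le).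
exists xb; split; [exact: xb_lt_r | split].
- rewrite -ler_pdivrMl //; apply: le_trans exb_le.
  by apply: ler_wpM2r.
- apply: gateaux_ekeland_point_eq (Fgat xb) _ (ltW e_gt0) em_lt1 xb_min => v.
  by have [L [_ [LK L_le]]] := hL xb (ltW xb_lt_r); exists (L v).
Qed.
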